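(* Absorption does not hold between $SIS$ and any of $III$, $IIS$, $SII$: for each $st\in\{III, IIS, SII\}$, $SIS\circ st\neq SIS$ and $st\circ SIS\neq st$ (as partial functions on terms); a witnessing term is $(\lambda k.k\,\Omega)(\lambda x.y)$, where $\Omega=(\lambda x.xx)(\lambda x.xx)$.
   Context: Terms: $\Lambda ::= x\mid\lambda x.\Lambda\mid\Lambda\Lambda$; $[N/x]B$ is capture-avoiding substitution. An evaluator is a partial function $\Lambda\rightharpoonup\Lambda$ defined by inference rules, undefined (divergent) where no finite derivation exists; $\mathrm{id}$ is the identity; composition is undefined where the inner evaluator is. Eval-apply template: given evaluators $la,op_1,ar_1,op_2,ar_2$ (possibly $ea$ itself), $ea$ is defined by (var) $ea(x)=x$; (abs) $ea(\lambda x.B)=\lambda x.B'$ if $la(B)=B'$; (con) $ea(MN)=B'$ if $op_1(M)=\lambda x.B$, $ar_1(N)=N'$, $ea([N'/x]B)=B'$; (neu) $ea(MN)=M''N'$ if $op_1(M)=M'$, $M'$ not an abstraction, $op_2(M')=M''$, $ar_2(N)=N'$. Uniform evaluator $XYZ\in\{I,S\}^3$: $op_1=ea$, $op_2=\mathrm{id}$, and $la$, $ar_1$, $ar_2$ equal to $ea$ itself when the corresponding letter $X$, $Y$, $Z$ is $S$ and to $\mathrm{id}$ when it is $I$. A strategy $st_2$ absorbs $st_1$ iff $st_2\circ st_1=st_2$. *)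

From Stdlib Require Import Arith.

Inductive term : Type :=
| var : nat -> term
| lam : term -> term
| app : term -> term -> term.

Fixpoint lift (d c : nat) (t : term) : term :=
  match t with
  | var n => if c <=? n then var (n + d) else var n
  | lam b => lam (lift d (S c) b)
  | app a b => app (lift d c a) (lift d c b)
  end.

(* subst k N t : capture-avoiding substitution of N for index k in t,
   removing the binder (indices above k are decremented). *)
Fixpoint subst (k : nat) (N : term) (t : term) : term :=
  match t with
  | var n => if n <? k then var n
             else if n =? k then lift k 0 N
             else var (pred n)
  | lam b => lam (subst (S k) N b)
  | app a b => app (subst k N a) (subst k N b)
  end.

(* [N/x]B where B is the body of  lam B  (x = index 0) *)
Definition subst0 (N B : term) : term := subst 0 N B.

Definition is_abs (t : term) : Prop :=
  match t with lam _ => True | _ => False end.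

(* Letters of uniform evaluators: I = identity, S = the evaluator itself. *)
Inductive letter : Type := I | S.

(* Uniform evaluator XYZ, as a big-step relation: ev X Y Z t t' means
   ea(t) = t' has a finite derivation. op1 = ea, op2 = id,
   la / ar1 / ar2 are given by the letters X / Y / Z via [evl]. *)
Inductive ev (X Y Z : letter) : term -> term -> Prop :=
| ev_var : forall n, ev X Y Z (var n) (var n)
| ev_abs : forall B B', evl X Y Z X B B' -> ev X Y Z (lam B) (lam B')
| ev_con : forall M N B N' B',
    ev X Y Z M (lam B) -> evl X Y Z Y N N' ->
    ev X Y Z (subst0 N' B) B' -> ev X Y Z (app M N) B'
| ev_neu : forall M N M' N',
    ev X Y Z M M' -> ~ is_abs M' -> evl X Y Z Z N N' ->
    ev X Y Z (app M N) (app M' N')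
with evl (X Y Z : letter) : letter -> term -> term -> Prop :=
| evl_I : forall t, evl X Y Z I t t
| evl_S : forall t t', ev X Y Z t t' -> evl X Y Z S t t'.

(* An evaluator, viewed as (the graph of) a partial function. *)
Definition evaluator := term -> term -> Prop.

Definition strat (X Y Z : letter) : evaluator := ev X Y Z.

Definition III := strat I I I.
Definition IIS := strat I I S.
Definition SII := strat S I I.
Definition SIS := strat S I S.

Definition compose (g f : evaluator) : evaluator :=
  fun t u => exists m, f t m /\ g m u.

Definition differ_at (f g : evaluator) (t : term) : Prop :=
  ~ (forall u, f t u <-> g t u).

Definition delta : term := lam (app (var 0) (var 0)).
Definition Omega : term := app delta delta.

(* (\k. k Omega) (\x. y), with y the free variable of index 0 *)
Definition witness : term :=
  app (lam (app (var 0) Omega)) (lam (var 1)).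


(* Every uniform evaluator maps [delta] to itself, so contracting [Omega]
   yields [Omega] again and no finite derivation exists.  The operator
   [\k. k Omega] of the witness is an abstraction: if [la = ar2 = ea] (as in
   SIS), evaluating it means evaluating the neutral term [k Omega], hence
   [Omega], and the witness diverges.  If [ar1 = id] and either [la = id] or
   [ar2 = id] (III, IIS, SII), [Omega] is never evaluated: the witness
   contracts to [(\x. y) Omega] and then to [y]. *)

Lemma ev_var_inv {X Y Z : letter} (n : nat) (u : term) :
  ev X Y Z (var n) u -> u = var n.
Proof. intros H; inversion H; reflexivity. Qed.

Lemma evl_var_inv {X Y Z : letter} (L : letter) (n : nat) (u : term) :
  evl X Y Z L (var n) u -> u = var n.
Proof.
  intros H; inversion H as [|t t' Ht]; [reflexivity | exact (ev_var_inv _ _ Ht)].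
Qed.

Lemma ev_delta_inv {X Y Z : letter} (u : term) : ev X Y Z delta u -> u = delta.
Proof.
  intros H; inversion H as [|B B' Hbody| |]; subst.
  inversion Hbody as [|t t' Happ]; subst; [reflexivity|].
  inversion Happ as [| |? ? ? ? ? Hop _ _|? ? M' N' Hop _ Harg]; subst.
  - apply ev_var_inv in Hop; discriminate.
  - apply ev_var_inv in Hop; apply evl_var_inv in Harg; subst; reflexivity.
Qed.

Lemma evl_delta_inv {X Y Z : letter} (L : letter) (u : term) :
  evl X Y Z L delta u -> u = delta.
Proof.
  intros H; inversion H as [|t t' Ht]; [reflexivity | exact (ev_delta_inv _ Ht)].
Qed.

Lemma Omega_diverges {X Y Z : letter} (u : term) : ~ ev X Y Z Omega u.
Proof.
  intros H; remember Omega as t eqn:Et; revert Et.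
  induction H as [| |M N B N' B' Hop _ Harg _ IH|M N M' N' Hop _ Hnabs _];
    intros Et; try discriminate; injection Et as -> ->.
  - apply ev_delta_inv in Hop; apply evl_delta_inv in Harg.
    injection Hop as ->; subst N'; exact (IH eq_refl).
  - apply ev_delta_inv in Hop; subst M'; exact (Hnabs Logic.I).
Qed.

Lemma witness_diverges (Y : letter) (u : term) : ~ ev S Y S witness u.
Proof.
  assert (Hoperator : forall v, ~ ev S Y S (lam (app (var 0) Omega)) v).
  { intros v H; inversion H as [|B B' Hbody| |]; subst.
    inversion Hbody as [|t t' Happ]; subst.
    inversion Happ as [| |? ? ? ? ? Hvar _ _|? ? M' N' _ _ Harg]; subst.
    - apply ev_var_inv in Hvar; discriminate.
    - inversion Harg as [|? ? HOmega]; subst; exact (Omega_diverges _ HOmega). }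
  intros H; inversion H as [| |? ? ? ? ? Hm _ _|? ? ? ? Hm _ _]; subst;
    exact (Hoperator _ Hm).
Qed.

Lemma witness_evaluates (X Z : letter) :
  X = I \/ Z = I -> ev X I Z witness (var 0).
Proof.
  intros HXZ; unfold witness.
  assert (Hconst : ev X I Z (lam (var 1)) (lam (var 1))).
  { apply ev_abs; destruct X; constructor; constructor. }
  eapply ev_con; [| apply evl_I |]; cbn.
  - apply ev_abs; destruct X; [apply evl_I|].
    destruct HXZ as [HX | ->]; [discriminate HX|].
    apply evl_S, ev_neu; [apply ev_var | intros Habs; exact Habs | apply evl_I].
  - eapply ev_con; [exact Hconst | apply evl_I | apply ev_var].
Qed.

Lemma differ_at_defined_undefined (f g : evaluator) (t u : term) :
  f t u -> (forall v, ~ g t v) -> differ_at f g t.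
Proof. intros Hf Hg Heq; exact (Hg u (proj1 (Heq u) Hf)). Qed.

Lemma differ_at_sym (f g : evaluator) (t : term) :
  differ_at f g t -> differ_at g f t.
Proof. intros Hd Heq; apply Hd; intros u; symmetry; apply Heq. Qed.

Lemma compose_undefined (g f : evaluator) (t : term) :
  (forall m, ~ f t m) -> forall u, ~ compose g f t u.
Proof. intros Hf u [m [Hm _]]; exact (Hf m Hm). Qed.

Theorem mainTheorem4 :
  forall st : evaluator, (st = III \/ st = IIS \/ st = SII) ->
    differ_at (compose SIS st) SIS witness /\
    differ_at (compose st SIS) st witness.
Proof.
  intros st Hst.
  assert (Hst_witness : st witness (var 0)).
  { destruct Hst as [Est | [Est | Est]]; rewrite Est; apply witness_evaluates; auto. }
  assert (HSIS : forall u, ~ SIS witness u) by apply witness_diverges.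
  split.
  - apply (differ_at_defined_undefined _ _ _ (var 0)); [|exact HSIS].
    exists (var 0); split; [exact Hst_witness | apply ev_var].
  - apply differ_at_sym, (differ_at_defined_undefined _ _ _ (var 0) Hst_witness).
    apply compose_undefined, HSIS.
Qed.
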